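(* Let $T$ be a path forest of order $m^2$ that is impossibly burnable. Then the burning number of $T$ is greater than $m$; that is, $T$ is not well-burnable.
   Context: Graph burning on a finite simple graph $G$: initially all vertices are unburned. In each round $t\ge1$, first every unburned neighbour of a vertex that was burned by the end of round $t-1$ becomes burned, and a burning source is placed on (and burns) one unburned vertex; burned vertices stay burned. The burning number of $G$ is the least number of rounds after which all vertices are burned. A graph of order $N$ is well-burnable if its burning number is at most $\lceil\sqrt N\rceil$. A path forest is a disjoint union of paths, represented by the tuple $(l_1,\dots,l_n)$ of path orders. For $m\in\mathbb{N}$ and an integer $1\le l\le m^2$, let $B_m(l)$ be the least positive integer $t$ with $t\equiv l\pmod 2$ such that $l\le 2mt-t^2$. A path forest $(l_1,\dots,l_n)$ of order $m^2$ is impossibly burnable if $\sum_{i=1}^n B_m(l_i)>m$. *)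

From mathcomp Require Import all_boot all_order.
Set Implicit Arguments. Unset Strict Implicit. Unset Printing Implicit Defensive.

Section Burning.
Variable T : finType.
Variable e : rel T.

Definition spread (B : {set T}) : {set T} :=
  B :|: [set v | [exists u in B, e u v]].

Definition round (B : {set T}) (o : option T) : {set T} :=
  match o with
  | Some x => x |: spread B
  | None => spread B
  end.

Definition legal_round (B : {set T}) (o : option T) : bool :=
  match o with
  | Some x => x \notin spread B
  | None => spread B == setT
  end.

Fixpoint run_legal (B : {set T}) (os : seq (option T)) : bool :=
  match os with
  | [::] => true
  | o :: os' => legal_round B o && run_legal (round B o) os'
  end.

Definition burned_after (os : seq (option T)) : {set T} :=
  foldl round set0 os.

Definition burns_in (k : nat) : bool :=
  [exists os : k.-tuple (option T),
     run_legal set0 os && (burned_after os == setT)].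

(* Burning number: the least k such that all vertices are burned after k
   rounds.  Such k always exists and is at most #|T|, so searching
   0..#|T| finds the true minimum. *)
Definition burning_number : nat := find burns_in (iota 0 #|T|.+1).

End Burning.

(* Path forest (l_1,...,l_n): vertices are pairs (i, j) with j < l_i;
   (i,j) ~ (i',j') iff i = i' and |j - j'| = 1. *)
Definition pf_vertex (ls : seq nat) : finType :=
  {i : 'I_(size ls) & 'I_(nth 0 ls i)}.

Definition pf_edge (ls : seq nat) : rel (pf_vertex ls) :=
  fun u v => (tag u == tag v) &&
             (((tagged u : nat).+1 == tagged v) || ((tagged v : nat).+1 == tagged u)).

(* B_m(l): least positive t with t = l (mod 2) and l <= 2mt - t^2.
   For l >= 1 any such t lies in (0, 2m), so searching 0..2m is exhaustive. *)
Definition Bm (m l : nat) : nat :=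
  find (fun t => [&& 0 < t, odd t == odd l & l <= 2 * m * t - t ^ 2])
       (iota 0 (2 * m).+1).

Definition impossibly_burnable (m : nat) (ls : seq nat) : Prop :=
  sumn ls = m ^ 2 /\ m < sumn (map (Bm m) ls).

From mathcomp Require Import all_boot all_order.
From mathcomp Require Import zify.

Set Implicit Arguments.
Unset Strict Implicit.
Unset Printing Implicit Defensive.

(* Suppose the forest burns within k <= m rounds.  A source placed in round t, counting from 0, burns at most
   2(k-1-t)+1 vertices, all on its own path.  Hence a path of order l carrying c
   sources satisfies l <= S, where S is a sum of c distinct odd numbers among
   1, 3, ..., 2k-1.  Over all paths these sums add up to at most k^2 <= m^2,
   which is the order of the forest, so l = S on every path.  Such an S has the
   parity of c and S <= k^2 - (k-c)^2 <= 2mc - c^2, so B_m(l) <= c, and summing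
   over the paths gives sum_i B_m(l_i) <= k <= m. *)

Definition distn (a b : nat) := (a - b) + (b - a).

Definition ball l (c r : nat) : {set 'I_l} := [set j : 'I_l | distn c j <= r].

Lemma card_ball l c r : #|ball l c r| <= (2 * r).+1.
Proof.
pose f (j : 'I_l) : 'I_((2 * r).+1) := inord (j + r - c).
rewrite -(@card_in_imset _ _ f); last first.
  move=> j1 j2; rewrite !inE /distn => near1 near2 /(congr1 val).
  rewrite /f /= !inordK; try lia.
  by move=> eq_f; apply: val_inj => /=; lia.
by rewrite -[X in _ <= X](card_ord ((2 * r).+1)) max_card.
Qed.

Lemma card_bigcup_le (I T : finType) (P : pred I) (F : I -> {set T}) :
  #|\bigcup_(i | P i) F i| <= \sum_(i | P i) #|F i|.
Proof.
elim/big_rec2: _ => [|i U n _ IH]; first by rewrite cards0.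
by apply: leq_trans (leq_card_setU _ _) _; rewrite leq_add2l.
Qed.

Lemma sum_odd_le k (P : pred 'I_k) :
  \sum_(t < k | P t) (2 * (k.-1 - t)).+1 + #|P| ^ 2 <= 2 * k * #|P|.
Proof.
rewrite -sum1_card; elim: k P => [|k IH] P; first by rewrite !big_ord0.
rewrite !(big_mkcond P) !big_ord_recl -!big_mkcond /=.
have -> : \sum_(i < k | P (lift ord0 i)) (2 * (k.+1.-1 - lift ord0 i)).+1
        = \sum_(i < k | P (lift ord0 i)) (2 * (k.-1 - i)).+1.
  by apply: eq_bigr => i _; rewrite /= /bump /=; have := ltn_ord i; lia.
have := IH (fun i => P (lift ord0 i)); rewrite /in_mem /=.
have : \sum_(i < k | P (lift ord0 i)) 1 <= k.
  by rewrite sum1_card -[X in _ <= X](card_ord k) max_card.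
case: (P ord0) => /=; nia.
Qed.

Lemma odd_sum_odd k (P : pred 'I_k) (f : 'I_k -> nat) :
  odd (\sum_(t < k | P t) (2 * f t).+1) = odd #|P|.
Proof.
rewrite (eq_bigr (fun t => 2 * f t + 1)) => [|t _]; last by rewrite addn1.
by rewrite big_split /= -big_distrr sum1_card oddD oddM.
Qed.

Lemma sumn_map_nth (f : nat -> nat) (s : seq nat) :
  sumn (map f s) = \sum_(i < size s) f (nth 0 s i).
Proof. by rewrite sumnE big_map (big_nth 0) big_mkord. Qed.

Section PathForest.
Variable ls : seq nat.
Local Notation V := (pf_vertex ls).

Lemma card_pf_vertex : #|V| = sumn ls.
Proof.
rewrite card_tagged sumnE big_map big_enum /=.
under eq_bigr => i _ do rewrite card_ord.
by rewrite -(sumn_map_nth id) map_id.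
Qed.

Lemma burned_near_source (os : seq (option V)) (v : V) :
  v \in burned_after (@pf_edge ls) os ->
  exists t x, [/\ t < size os, nth None os t = Some x, tag x = tag v &
                  distn (tagged x) (tagged v) <= (size os).-1 - t].
Proof.
rewrite /burned_after.
elim/last_ind: os v => [|s o IH] v; first by rewrite /= inE.
rewrite foldl_rcons size_rcons /=.
have near_spread : v \in spread (@pf_edge ls) (foldl (round (@pf_edge ls)) set0 s) ->
    exists t x, [/\ t < (size s).+1, nth None (rcons s o) t = Some x, tag x = tag v &
                    distn (tagged x) (tagged v) <= size s - t].
  rewrite /spread !inE => /orP [/IH [t [x [Ht Hx Hxv Hd]]]|].
    by exists t, x; split; rewrite ?nth_rcons ?Ht //; move: Hd; rewrite /distn; lia.
  move=> /existsP [u /andP [/IH [t [x [Ht Hx Hxu Hd]]] /andP [/eqP Huv Hadj]]].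
  exists t, x; split; rewrite ?nth_rcons ?Ht ?Hxu //; first lia.
  by move: Hd Hadj; rewrite /distn => Hd /orP [/eqP | /eqP]; lia.
case: o near_spread => [x|] near_spread //=.
rewrite in_setU1 => /orP [/eqP ->|]; last exact: near_spread.
exists (size s), x; split => //; first by rewrite nth_rcons ltnn eqxx.
by rewrite /distn subnn.
Qed.

Section Sources.
Variable os : seq (option V).

Definition source_on (i : 'I_(size ls)) (t : nat) : bool :=
  if nth None os t is Some x then tag x == i else false.

Definition source_pos (t : nat) : nat :=
  if nth None os t is Some x then val (tagged x) else 0.

Lemma sum_sources_le k (F : nat -> nat) :
  \sum_(i < size ls) \sum_(t < k | source_on i t) F t <= \sum_(t < k) F t.
Proof.
under eq_bigr => i _ do rewrite big_mkcond.
rewrite exchange_big; apply: leq_sum => t _.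
rewrite -big_mkcond /source_on; case: (nth None os t) => [x|]; last by rewrite big_pred0.
by rewrite (big_pred1 (tag x)) // => y /=; rewrite eq_sym.
Qed.

Lemma path_length_le (i : 'I_(size ls)) :
  burned_after (@pf_edge ls) os = setT ->
  nth 0 ls i <= \sum_(t < size os | source_on i t) (2 * ((size os).-1 - t)).+1.
Proof.
move=> burned; set k := size os.
have cover : [set: 'I_(nth 0 ls i)] \subset
    \bigcup_(t < k | source_on i t) ball (nth 0 ls i) (source_pos t) (k.-1 - t).
  apply/subsetP => j _.
  have := @burned_near_source os (Tagged (fun i : 'I_(size ls) => 'I_(nth 0 ls i)) j : V).
  rewrite burned inE => /(_ isT) [t [x [Ht Hx Hxi Hd]]].
  apply/bigcupP; exists (Ordinal Ht); first by rewrite /source_on Hx Hxi.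
  by rewrite inE /source_pos Hx.
have := subset_leq_card cover; rewrite cardsT card_ord => /leq_trans; apply.
apply: leq_trans (card_bigcup_le _ _) _.
by apply: leq_sum => t _; apply: card_ball.
Qed.

End Sources.
End PathForest.

Lemma Bm_le m l c : 0 < c -> odd c = odd l -> l + c ^ 2 <= 2 * m * c -> Bm m l <= c.
Proof.
move=> c_gt0 odd_cl lc_le; rewrite /Bm.
have c_le : c <= 2 * m by nia.
case: (leqP (find _ _) c) => // lt_c.
have := before_find 0 lt_c; rewrite nth_iota; last by lia.
by rewrite add0n c_gt0 odd_cl eqxx /=; have -> : l <= 2 * m * c - c ^ 2 by lia.
Qed.

Lemma Bm_sum_odd_le m k (P : pred 'I_k) : k <= m ->
  0 < \sum_(t < k | P t) (2 * (k.-1 - t)).+1 ->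
  Bm m (\sum_(t < k | P t) (2 * (k.-1 - t)).+1) <= #|P|.
Proof.
move=> le_km S_gt0; have sum_le := sum_odd_le P.
apply: Bm_le; [nia | by rewrite odd_sum_odd | nia].
Qed.

Lemma burns_in_burning_number (T : finType) (e : rel T) :
  burning_number e <= #|T| -> burns_in e (burning_number e).
Proof.
rewrite /burning_number => bn_le.
have has_burn : has (burns_in e) (iota 0 #|T|.+1) by rewrite has_find size_iota.
by have := nth_find 0 has_burn; rewrite nth_iota ?add0n.
Qed.

Lemma sumn_Bm_le m ls k :
  all (fun l => 0 < l) ls -> sumn ls = m ^ 2 -> k <= m ->
  burns_in (@pf_edge ls) k -> sumn (map (Bm m) ls) <= k.
Proof.
move=> ls_pos sum_ls le_km /existsP [os /andP [_ /eqP burned]].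
pose S i := \sum_(t < k | source_on os i t) (2 * (k.-1 - t)).+1.
have le_S (i : 'I_(size ls)) : nth 0 ls i <= S i.
  by have := @path_length_le ls os i burned; rewrite size_tuple.
have sum_S : \sum_(i < size ls) S i <= m ^ 2.
  apply: leq_trans (sum_sources_le os k (fun t => (2 * (k.-1 - t)).+1)) _.
  have := sum_odd_le (@predT 'I_k); rewrite cardT size_enum_ord big_mkcond /=.
  nia.
have tight (i : 'I_(size ls)) : nth 0 ls i = S i.
  have [_ all_eq] := leqif_sum (P := predT) (fun j _ => leqif_eq (le_S j)).
  have /forall_inP/(_ i isT)/eqP // :
    [forall (j : 'I_(size ls) | predT j), nth 0 ls j == S j].
  by rewrite -all_eq eqn_leq leq_sum //= -(sumn_map_nth id) map_id sum_ls.
rewrite sumn_map_nth.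
apply: (@leq_trans (\sum_(i < size ls) #|[pred t : 'I_k | source_on os i t]|)).
  apply: leq_sum => i _; rewrite tight; apply: Bm_sum_odd_le => //.
  rewrite -/(S i) -tight.
  by apply: (allP ls_pos); apply: mem_nth.
under eq_bigr do rewrite -sum1_card.
apply: leq_trans (sum_sources_le os k (fun _ => 1)) _.
by rewrite sum_nat_const card_ord muln1.
Qed.

Theorem mainTheorem2 (m : nat) (ls : seq nat) :
  all (fun l => 0 < l) ls ->
  impossibly_burnable m ls ->
  m < @burning_number (pf_vertex ls) (@pf_edge ls).
Proof.
move=> ls_pos [sum_ls lt_m_Bm]; rewrite ltnNge; apply/negP => bn_le.
have m_le_card : m <= #|pf_vertex ls| by rewrite card_pf_vertex sum_ls; nia.
have burns := burns_in_burning_number (leq_trans bn_le m_le_card).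
by have := leq_trans lt_m_Bm (sumn_Bm_le ls_pos sum_ls bn_le burns); rewrite ltnNge bn_le.
Qed.
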